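(* There exist constants $c_1,c_2>0$ (depending only on $d$) such that for all $z,z'\in\mathbb{R}^{2d+1}$: if $c_1\min\{\|z'\|,\|(z')^{-1}\|\}\le\|z\|$, then $c_2\|z\|\le\min\{\|z\circ z'\|,\|z'\circ z\|\}$.
   Context: Let $d\ge1$. Points of $\mathbb{R}^{2d+1}$ are $z=(x,y,t)$ with $x,y\in\mathbb{R}^d$, $t\in\mathbb{R}$. Group law: $(x',y',t')\circ(x,y,t)=(x+x'+ty',y+y',t+t')$; inverse $(x,y,t)^{-1}=(-x+ty,-y,-t)$. Quasi-norm $\|z\|=|x|^{1/3}+|y|+|t|^{1/2}$. *)

From HB Require Import structures.
From mathcomp Require Import all_boot all_order all_algebra.
From mathcomp Require Import all_classical all_reals all_analysis.
Set Implicit Arguments. Unset Strict Implicit. Unset Printing Implicit Defensive.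
Import Order.TTheory GRing.Theory Num.Theory.
Local Open Scope ring_scope.

Definition pt (R : realType) (d : nat) : Type := ('rV[R]_d * 'rV[R]_d * R)%type.

Definition px {R : realType} {d : nat} (z : pt R d) : 'rV[R]_d := z.1.1.
Definition py {R : realType} {d : nat} (z : pt R d) : 'rV[R]_d := z.1.2.
Definition pt_t {R : realType} {d : nat} (z : pt R d) : R := z.2.

Definition gmul {R : realType} {d : nat} (a b : pt R d) : pt R d :=
  (px b + px a + pt_t b *: py a, py a + py b, pt_t a + pt_t b).

Definition ginv {R : realType} {d : nat} (z : pt R d) : pt R d :=
  (- px z + pt_t z *: py z, - py z, - pt_t z).

Definition eucl {R : realType} {d : nat} (v : 'rV[R]_d) : R :=
  Num.sqrt (\sum_(i < d) v ord0 i ^+ 2).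

Definition qnorm {R : realType} {d : nat} (z : pt R d) : R :=
  powR (eucl (px z)) (3%:R^-1) + eucl (py z) + Num.sqrt `|pt_t z|.

(* The quasi-norm satisfies a quasi-triangle inequality |z o z'| <= 2 (|z| + |z'|)
   and |z^-1| <= 2 |z|.  The y- and t-components are subadditive; the only
   interaction is the term t y' in the x-component, handled by AM-GM:
   |t| |y'| <= ((2 |t|^(1/2) + |y'|) / 3)^3, so its cube root is at most
   (2 |t|^(1/2) + |y'|) / 3.  Writing z = (z o z') o z'^-1 then gives
   |z| <= 2 |z o z'| + 2 |z'^-1|, and with c1 = 8 the hypothesis makes the last
   term at most |z| / 2, whence c2 = 1/4 (symmetrically for z' o z). *)
From HB Require Import structures.
From mathcomp Require Import all_boot all_order all_algebra.
From mathcomp Require Import all_classical all_reals all_analysis.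
From mathcomp Require Import ring lra.
Set Implicit Arguments. Unset Strict Implicit. Unset Printing Implicit Defensive.
Import Order.TTheory GRing.Theory Num.Theory.
Local Open Scope ring_scope.

Section RealRoots.
Variable R : realType.

Lemma sqrtr_le_sqr (x y : R) : 0 <= y -> x <= y ^+ 2 -> Num.sqrt x <= y.
Proof.
move=> y0 xy; apply: (@le_trans _ _ (Num.sqrt (y ^+ 2))).
  by rewrite ler_sqrt // sqr_ge0.
by rewrite sqrtr_sqr ger0_norm.
Qed.

Lemma sqrtr_normD (a b : R) :
  Num.sqrt `|a + b| <= Num.sqrt `|a| + Num.sqrt `|b|.
Proof.
have ha := sqr_sqrtr (normr_ge0 a); have hb := sqr_sqrtr (normr_ge0 b).
have a0 := sqrtr_ge0 `|a|; have b0 := sqrtr_ge0 `|b|.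
apply: sqrtr_le_sqr; first by nra.
by rewrite sqrrD ha hb; have := ler_normD a b; nra.
Qed.

Definition cbrt (x : R) : R := powR x 3%:R^-1.

Lemma cbrt_ge0 (x : R) : 0 <= cbrt x.
Proof. exact: powR_ge0. Qed.

Lemma cbrt0 : cbrt 0 = 0.
Proof. by rewrite /cbrt powR0 // invr_eq0 pnatr_eq0. Qed.

Lemma cbrtK (x : R) : 0 <= x -> cbrt x ^+ 3 = x.
Proof.
move=> x0; rewrite /cbrt -powR_mulrn ?powR_ge0 // -powRrM.
by rewrite mulVf ?pnatr_eq0 // powRr1.
Qed.

Lemma exp3K (q : R) : 0 <= q -> cbrt (q ^+ 3) = q.
Proof.
move=> q0; rewrite /cbrt -powR_mulrn // -powRrM.
by rewrite mulfV ?pnatr_eq0 // powRr1.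
Qed.

Lemma cbrt_le (p q : R) : 0 <= p -> 0 <= q -> p <= q ^+ 3 -> cbrt p <= q.
Proof.
move=> p0 q0 pq; rewrite -(exp3K q0).
by apply: ge0_ler_powR; rewrite ?nnegrE ?invr_ge0 ?exprn_ge0.
Qed.

Lemma sqr_mul_le_mean_cube (s e : R) : 0 <= s -> 0 <= e ->
  s ^+ 2 * e <= ((2 * s + e) / 3%:R) ^+ 3.
Proof.
move=> s0 e0.
have -> : ((2 * s + e) / 3%:R) ^+ 3 = (2 * s + e) ^+ 3 / 27%:R by field.
rewrite ler_pdivlMr ?ltr0n //.
have : 0 <= (s - e) ^+ 2 * (8%:R * s + e) by apply: mulr_ge0; [exact: sqr_ge0|nra].
nra.
Qed.

Lemma expr3_addr3_ge (p q w : R) : 0 <= p -> 0 <= q -> 0 <= w ->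
  p ^+ 3 + q ^+ 3 + w ^+ 3 <= (p + q + w) ^+ 3.
Proof.
move=> p0 q0 w0.
have pq : 0 <= p * q by exact: mulr_ge0.
have pw : 0 <= p * w by exact: mulr_ge0.
have qw : 0 <= q * w by exact: mulr_ge0.
nra.
Qed.

Lemma cbrt_le_add3 (x a b s e : R) :
  0 <= x -> 0 <= a -> 0 <= b -> 0 <= s -> 0 <= e ->
  x <= a + b + s ^+ 2 * e ->
  cbrt x <= cbrt a + cbrt b + (2 * s + e) / 3%:R.
Proof.
move=> x0 a0 b0 s0 e0 xle.
have w0 : 0 <= (2 * s + e) / 3%:R by apply: divr_ge0; [nra|rewrite ler0n].
apply: cbrt_le => //; first by rewrite !addr_ge0 ?cbrt_ge0.
apply: le_trans (expr3_addr3_ge (cbrt_ge0 a) (cbrt_ge0 b) w0).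
rewrite !cbrtK //; apply: (le_trans xle); rewrite lerD2l.
exact: sqr_mul_le_mean_cube.
Qed.

End RealRoots.

Section Euclidean.
Variables (R : realType) (d : nat).
Implicit Types u v : 'rV[R]_d.

Lemma eucl_ge0 v : 0 <= eucl v.
Proof. exact: sqrtr_ge0. Qed.

Lemma eucl0 : eucl (0 : 'rV[R]_d) = 0.
Proof. by rewrite /eucl big1 ?sqrtr0 // => i _; rewrite mxE expr0n. Qed.

Lemma eucl_sqr v : eucl v ^+ 2 = \sum_i v ord0 i ^+ 2.
Proof. by rewrite sqr_sqrtr // sumr_ge0 // => i _; rewrite sqr_ge0. Qed.

Lemma eucl_eq0_coord v : eucl v = 0 -> forall i, v ord0 i = 0.
Proof.
move=> v0 i; apply/eqP; rewrite -sqrf_eq0; apply/eqP.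
have sum0 : \sum_j v ord0 j ^+ 2 = 0 by rewrite -eucl_sqr v0 expr0n.
by move/psumr_eq0P: sum0 => ->// j _; rewrite sqr_ge0.
Qed.

Lemma cauchy_schwarz u v : \sum_i u ord0 i * v ord0 i <= eucl u * eucl v.
Proof.
have [u0|u_neq0] := eqVneq (eucl u) 0.
  by rewrite big1 ?mulr_ge0 ?eucl_ge0 // => i _; rewrite (eucl_eq0_coord u0) mul0r.
have [v0|v_neq0] := eqVneq (eucl v) 0.
  by rewrite big1 ?mulr_ge0 ?eucl_ge0 // => i _; rewrite (eucl_eq0_coord v0) mulr0.
have uv0 : 0 < eucl u * eucl v by rewrite mulr_gt0 // lt_def ?u_neq0 ?v_neq0 eucl_ge0.
have key : 2%:R * (eucl u * eucl v) * \sum_i u ord0 i * v ord0 i <=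
    eucl v ^+ 2 * \sum_i u ord0 i ^+ 2 + eucl u ^+ 2 * \sum_i v ord0 i ^+ 2.
  rewrite !mulr_sumr -big_split /=; apply: ler_sum => i _.
  have := sqr_ge0 (eucl v * u ord0 i - eucl u * v ord0 i); nra.
rewrite -!eucl_sqr in key; nra.
Qed.

Lemma euclD u v : eucl (u + v) <= eucl u + eucl v.
Proof.
apply: sqrtr_le_sqr; first by rewrite addr_ge0 ?eucl_ge0.
have -> : \sum_i (u + v) ord0 i ^+ 2 =
    \sum_i u ord0 i ^+ 2 + 2%:R * \sum_i u ord0 i * v ord0 i + \sum_i v ord0 i ^+ 2.
  by rewrite mulr_sumr -!big_split; apply: eq_bigr => i _; rewrite mxE /=; ring.
rewrite sqrrD -!eucl_sqr; have := cauchy_schwarz u v; lra.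
Qed.

Lemma euclZ (t : R) v : eucl (t *: v) = `|t| * eucl v.
Proof.
rewrite /eucl -sqrtr_sqr -sqrtrM ?sqr_ge0 // mulr_sumr.
by congr Num.sqrt; apply: eq_bigr => i _; rewrite mxE exprMn.
Qed.

Lemma euclN v : eucl (- v) = eucl v.
Proof. by rewrite -scaleN1r euclZ normrN normr1 mul1r. Qed.

Lemma cbrt_eucl_addZ u v w (t : R) :
  cbrt (eucl (u + v + t *: w)) <=
  cbrt (eucl u) + cbrt (eucl v) + (2 * Num.sqrt `|t| + eucl w) / 3%:R.
Proof.
apply: cbrt_le_add3; rewrite ?eucl_ge0 ?sqrtr_ge0 //.
rewrite sqr_sqrtr // -euclZ.
by apply: (le_trans (euclD _ _)); rewrite lerD2r euclD.
Qed.

End Euclidean.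

Section QuasiNorm.
Variables (R : realType) (d : nat).
Implicit Types a b z : pt R d.

Lemma qnorm_ge0 z : 0 <= qnorm z.
Proof. by rewrite !addr_ge0 ?powR_ge0 ?eucl_ge0 ?sqrtr_ge0. Qed.

Lemma qnorm_gmul_le a b : qnorm (gmul a b) <= 2%:R * (qnorm a + qnorm b).
Proof.
have hx := cbrt_eucl_addZ (px b) (px a) (py a) (pt_t b).
have hy := euclD (py a) (py b).
have ht := sqrtr_normD (pt_t a) (pt_t b).
have := cbrt_ge0 (eucl (px a)); have := cbrt_ge0 (eucl (px b)).
have := eucl_ge0 (py a); have := eucl_ge0 (py b).
have := sqrtr_ge0 `|pt_t a|; have := sqrtr_ge0 `|pt_t b|.
rewrite /cbrt in hx *; rewrite /qnorm /=; lra.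
Qed.

Lemma qnorm_ginv_le z : qnorm (ginv z) <= 2%:R * qnorm z.
Proof.
have hx := cbrt_eucl_addZ (- px z) 0 (py z) (pt_t z).
rewrite addr0 euclN eucl0 cbrt0 addr0 in hx.
have := cbrt_ge0 (eucl (px z)); have := eucl_ge0 (py z).
have := sqrtr_ge0 `|pt_t z|.
rewrite /cbrt in hx *; rewrite /qnorm /= euclN normrN; lra.
Qed.

Lemma gmulK a b : gmul (gmul a b) (ginv b) = a.
Proof.
case: a => [[x y] t]; case: b => [[x' y'] t']; rewrite /gmul /ginv /px /py /pt_t /=.
by congr (_, _, _); try (apply/rowP => i; rewrite !mxE); ring.
Qed.

Lemma ginv_mulK a b : gmul (ginv b) (gmul b a) = a.
Proof.
case: a => [[x y] t]; case: b => [[x' y'] t']; rewrite /gmul /ginv /px /py /pt_t /=.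
by congr (_, _, _); try (apply/rowP => i; rewrite !mxE); ring.
Qed.

Lemma qnorm_ginv_le_min z :
  qnorm (ginv z) <= 2%:R * Num.min (qnorm z) (qnorm (ginv z)).
Proof.
have q0 := qnorm_ge0 (ginv z); have qle := qnorm_ginv_le z.
rewrite -ler_pdivrMl ?ltr0n // le_min; apply/andP; split; lra.
Qed.

Lemma qnorm_le_gmulr a b : qnorm a <= 2%:R * (qnorm (gmul a b) + qnorm (ginv b)).
Proof. by have := qnorm_gmul_le (gmul a b) (ginv b); rewrite gmulK. Qed.

Lemma qnorm_le_gmull a b : qnorm a <= 2%:R * (qnorm (ginv b) + qnorm (gmul b a)).
Proof. by have := qnorm_gmul_le (ginv b) (gmul b a); rewrite ginv_mulK. Qed.

End QuasiNorm.

Theorem mainTheorem6 (R : realType) (d : nat) (hd : (1 <= d)%N) :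
  exists c1 c2 : R, 0 < c1 /\ 0 < c2 /\
    forall z z' : pt R d,
      c1 * Num.min (qnorm z') (qnorm (ginv z')) <= qnorm z ->
      c2 * qnorm z <= Num.min (qnorm (gmul z z')) (qnorm (gmul z' z)).
Proof.
exists 8%:R, 4%:R^-1; split; first by rewrite ltr0n.
split; first by rewrite invr_gt0 ltr0n.
move=> z z' hz.
have hinv := qnorm_ginv_le_min z'.
move: hz hinv; set m := Num.min _ _ => hz hinv; clearbody m.
have hr := qnorm_le_gmulr z z'; have hl := qnorm_le_gmull z z'.
by rewrite le_min; apply/andP; split; lra.
Qed.
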